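(* As $2$-cochains on $PSL(2,\mathbb{Z})$, $\delta\Phi=-12\,\delta(rot)$; that is, for all $g_1,g_2\in PSL(2,\mathbb{Z})$ and any lifts $\tilde g_1,\tilde g_2\in B_3$, $$\Phi(g_1)+\Phi(g_2)-\Phi(g_1g_2)=-12\big(rot(\tilde g_1)+rot(\tilde g_2)-rot(\tilde g_1\tilde g_2)\big).$$
   Context: $B_3$ is the braid group with standard generators $\sigma_1,\sigma_2$, mapped onto $PSL(2,\mathbb{Z})$ by $\sigma_1\mapsto \pm\begin{pmatrix}1&0\\-1&1\end{pmatrix}$, $\sigma_2\mapsto \pm\begin{pmatrix}1&1\\0&1\end{pmatrix}$ (kernel generated by $(\sigma_1\sigma_2\sigma_1)^2$); $\bar\sigma$ denotes the image. Rademacher function: with $A=\pm\begin{pmatrix}0&1\\-1&0\end{pmatrix}$, $B=\pm\begin{pmatrix}1&-1\\1&0\end{pmatrix}$, $PSL(2,\mathbb{Z})=\langle A\rangle *\langle B\rangle\cong\mathbb{Z}/2*\mathbb{Z}/3$, every $g$ is uniquely $B^{r_1}AB^{r_2}A\cdots AB^{r_k}$ with $r_1,r_k\in\{-1,0,1\}$ and $r_i\in\{-1,1\}$ otherwise; $\Phi(g)=\sum_i r_i$. Rotation number on $B_3$: for $g=\pm\begin{pmatrix}\alpha&\beta\\ \gamma&\delta\end{pmatrix}$ put $a=\gamma/\alpha$, $b=\delta/\beta\in\mathbb{Q}\cup\{\infty\}$ ($\infty$ read as $\pm\infty$ as needed). For $g=\bar\sigma$ one of the following holds, and $\sigma$ is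 written uniquely as $(\sigma_1\sigma_2\sigma_1)^k w$ accordingly: (1) $0\le a<b\le+\infty$: $k$ even, $w$ a word in $\sigma_1^{-1},\sigma_2$ only; (2) $-\infty\le a<b\le 0$: $k$ odd, $w$ a word in $\sigma_1^{-1},\sigma_2$; (3) $0\le b<a\le+\infty$: $k$ odd, $w$ a word in $\sigma_1,\sigma_2^{-1}$; (4) $-\infty\le b<a\le 0$: $k$ even, $w$ a word in $\sigma_1,\sigma_2^{-1}$. Then $rot(\sigma)=k/4$. The expression $rot(\tilde g_1)+rot(\tilde g_2)-rot(\tilde g_1\tilde g_2)$ does not depend on the choice of lifts. *)

From Stdlib Require Import ClassicalEpsilon.
From mathcomp Require Import all_boot all_order all_algebra.
Set Implicit Arguments. Unset Strict Implicit. Unset Printing Implicit Defensive.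
Import Order.TTheory GRing.Theory Num.Theory.
Local Open Scope ring_scope.

Definition mx2 (a b c d : int) : 'M[int]_2 :=
  \matrix_(i < 2, j < 2)
    if i == ord0 then (if j == ord0 then a else b) else (if j == ord0 then c else d).

Definition psl_eq (M N : 'M[int]_2) : Prop := M = N \/ M = - N.

Inductive gen := s1 | s2 | s1i | s2i.
Definition word := seq gen.

Inductive brel : word -> word -> Prop :=
  | br_11 : brel [:: s1; s1i] [::]
  | br_11' : brel [:: s1i; s1] [::]
  | br_22 : brel [:: s2; s2i] [::]
  | br_22' : brel [:: s2i; s2] [::]
  | br_braid : brel [:: s1; s2; s1] [:: s2; s1; s2].

Inductive beq : word -> word -> Prop :=
  | beq_step u x y v : brel x y -> beq (u ++ x ++ v) (u ++ y ++ v)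
  | beq_refl w : beq w w
  | beq_sym w w' : beq w w' -> beq w' w
  | beq_trans w1 w2 w3 : beq w1 w2 -> beq w2 w3 -> beq w1 w3.

(* the projection B_3 -> PSL(2,Z) (on representative matrices in SL(2,Z)) *)
Definition gen_mx (x : gen) : 'M[int]_2 :=
  match x with
  | s1 => mx2 1 0 (-1) 1
  | s2 => mx2 1 1 0 1
  | s1i => mx2 1 0 1 1
  | s2i => mx2 1 (-1) 0 1
  end.

Fixpoint word_mx (w : word) : 'M[int]_2 :=
  match w with
  | [::] => 1%:M
  | x :: w' => gen_mx x *m word_mx w'
  end.

Definition lifts (s : word) (g : 'M[int]_2) : Prop := psl_eq (word_mx s) g.

Definition matA : 'M[int]_2 := mx2 0 1 (-1) 0.
Definition matB : 'M[int]_2 := mx2 1 (-1) 1 0.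
Definition matBinv : 'M[int]_2 := mx2 0 1 (-1) 1.

Definition Bpow (r : int) : 'M[int]_2 :=
  if r == 1 then matB else if r == -1 then matBinv else 1%:M.

Fixpoint nf_mx (r : seq int) : 'M[int]_2 :=
  match r with
  | [::] => 1%:M
  | [:: x] => Bpow x
  | x :: r' => Bpow x *m matA *m nf_mx r'
  end.

Definition in_m101 (x : int) : bool := [|| x == -1, x == 0 | x == 1].
Definition in_pm1 (x : int) : bool := (x == -1) || (x == 1).

Definition nf_ok (r : seq int) : bool :=
  match r with
  | [::] => false
  | x :: r' => in_m101 x && in_m101 (last x r') && all in_pm1 (behead (belast x r'))
  end.

Definition is_nf (g : 'M[int]_2) (r : seq int) : Prop := nf_ok r /\ psl_eq (nf_mx r) g.

Definition Phi (g : 'M[int]_2) : int :=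
  \sum_(x <- epsilon (inhabits [::]) (is_nf g)) x.

Definition Delta : word := [:: s1; s2; s1].
Definition Delta_inv : word := [:: s1i; s2i; s1i].

Definition Delta_pow (k : int) : word :=
  match k with
  | Posz n => flatten (nseq n Delta)
  | Negz n => flatten (nseq n.+1 Delta_inv)
  end.

(* extended rationals Q u {oo}: None stands for oo *)
Definition ratio (num den : int) : option rat :=
  if den == 0 then None else Some (num%:~R / den%:~R).

(* a = gamma/alpha, b = delta/beta for g = +-[[alpha, beta],[gamma, delta]] *)
Definition ra (g : 'M[int]_2) : option rat := ratio (g ord_max ord0) (g ord0 ord0).
Definition rb (g : 'M[int]_2) : option rat := ratio (g ord_max ord_max) (g ord0 ord_max).

(* "oo read as +-oo as needed" *)
Definition case1 (a b : option rat) : bool :=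
  match a, b with
  | Some a, None => 0 <= a
  | Some a, Some b => (0 <= a) && (a < b)
  | _, _ => false
  end.
Definition case2 (a b : option rat) : bool :=
  match a, b with
  | None, Some b => b <= 0
  | Some a, Some b => (a < b) && (b <= 0)
  | _, _ => false
  end.
Definition case3 (a b : option rat) : bool := case1 b a.
Definition case4 (a b : option rat) : bool := case2 b a.

Definition pos_letters (w : word) : bool :=
  all (fun x => match x with s1i | s2 => true | _ => false end) w.
Definition neg_letters (w : word) : bool :=
  all (fun x => match x with s1 | s2i => true | _ => false end) w.

Definition rot_decomp (s : word) (kw : int * word) : Prop :=
  let: (k, w) := kw in
  let g := word_mx s in
  beq s (Delta_pow k ++ w) /\
  [\/ [&& case1 (ra g) (rb g), ~~ odd `|k|%N & pos_letters w],
      [&& case2 (ra g) (rb g), odd `|k|%N & pos_letters w],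
      [&& case3 (ra g) (rb g), odd `|k|%N & neg_letters w]
    | [&& case4 (ra g) (rb g), ~~ odd `|k|%N & neg_letters w]].

Definition braid_rot (s : word) : rat :=
  ((epsilon (inhabits (0%:Z, [::])) (rot_decomp s)).1)%:~R / 4.

(* Both sides are read off the decomposition that defines rot.  Pushing letters through
   Delta = s1 s2 s1, which conjugates s1 <-> s2, and rewriting s1 s2 = Delta s1^-1 (and its
   three variants), every braid becomes Delta^k w with w a word in s1^-1, s2 only or in
   s1, s2^-1 only; its image in PSL(2,Z) is A^k w, since Delta maps to A.  On the other side
   B A = s2 and B^-1 A = -s1^-1, so the normal form B^r1 A ... A B^rk is A^c u A^d with u a
   positive word of exponent sum r1 + ... + rk, and moving the last A to the front through
   A^-1 u A = tau(u), tau swapping the indices 1 and 2, turns it into A^b v with v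
   one-signed.  The entries of a one-signed word
   have fixed signs and determine the word, so A^b v is unique.  Hence Phi(g) = e(w) =
   e(s) - 3k for every lift s of g, where e is the exponent sum; as e is a homomorphism and
   rot = k/4, the coboundaries satisfy delta Phi = -3 delta k = -12 delta rot. *)

From Pilot Require Import Defs.
From Stdlib Require Import ClassicalEpsilon.
From mathcomp Require Import all_boot all_order all_algebra.
From mathcomp Require Import zify ring.
Set Implicit Arguments. Unset Strict Implicit. Unset Printing Implicit Defensive.
Import Order.TTheory GRing.Theory Num.Theory.
Local Open Scope ring_scope.

Lemma mx2_mul a b c d a' b' c' d' :
  mx2 a b c d *m mx2 a' b' c' d'
  = mx2 (a * a' + b * c') (a * b' + b * d') (c * a' + d * c') (c * b' + d * d').
Proof.
apply/matrixP => i j; rewrite !mxE big_ord_recl big_ord1 !mxE.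
by case: i => [[|[|i]] Hi]; case: j => [[|[|j]] Hj].
Qed.

Lemma mx2_opp a b c d : - mx2 a b c d = mx2 (- a) (- b) (- c) (- d).
Proof. by apply/matrixP => i j; rewrite !mxE; case: eqP; case: eqP. Qed.

Lemma mx2_1 : 1%:M = mx2 1 0 0 1 :> 'M[int]_2.
Proof.
apply/matrixP => i j; rewrite !mxE.
by case: i => [[|[|i]] Hi]; case: j => [[|[|j]] Hj].
Qed.

Lemma mx2_inj a b c d a' b' c' d' :
  mx2 a b c d = mx2 a' b' c' d' -> [/\ a = a', b = b', c = c' & d = d'].
Proof.
move=> E; have entry i j := congr1 (fun M : 'M[int]_2 => M i j) E.
by move: (entry ord0 ord0) (entry ord0 ord_max) (entry ord_max ord0) (entry ord_max ord_max);
  rewrite !mxE.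
Qed.

Lemma psl_eq_refl M : psl_eq M M.
Proof. by left. Qed.

Lemma psl_eq_sym M N : psl_eq M N -> psl_eq N M.
Proof. by case=> ->; [left | right; rewrite opprK]. Qed.

Lemma psl_eq_trans M N P : psl_eq M N -> psl_eq N P -> psl_eq M P.
Proof. by case=> -> [] ->; rewrite ?opprK; [left | right | right | left]. Qed.

Lemma psl_eqN M : psl_eq M (- M).
Proof. by right; rewrite opprK. Qed.

Lemma psl_eq_mul M M' N N' :
  psl_eq M M' -> psl_eq N N' -> psl_eq (M *m N) (M' *m N').
Proof.
by case=> -> [] ->; rewrite ?mulNmx ?mulmxN ?opprK; [left | right | right | left].
Qed.

Lemma matA_sqr : matA *m matA = - 1%:M.
Proof. by rewrite mx2_mul mx2_1 mx2_opp. Qed.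

Lemma psl_eq_mulAA M : psl_eq (M *m matA *m matA) M.
Proof. by rewrite -mulmxA matA_sqr mulmxN mulmx1; apply/psl_eq_sym/psl_eqN. Qed.

Definition Apow (b : bool) : 'M[int]_2 := if b then matA else 1%:M.

Lemma Apow_mulA b : psl_eq (Apow b *m matA) (Apow (~~ b)).
Proof. by case: b; rewrite /= ?matA_sqr ?mul1mx; [apply/psl_eq_sym/psl_eqN | left]. Qed.

Definition gen_sign (x : gen) : int := match x with s1 | s2 => 1 | _ => -1 end.

Definition exp_sum (w : word) : int := \sum_(x <- w) gen_sign x.

Lemma exp_sum_cat u v : exp_sum (u ++ v) = exp_sum u + exp_sum v.
Proof. exact: big_cat. Qed.

Lemma word_mx_cat u v : word_mx (u ++ v) = word_mx u *m word_mx v.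
Proof. by elim: u => [|x u IH] /=; rewrite ?mul1mx // IH mulmxA. Qed.

Lemma brel_word_mx u v : brel u v -> word_mx u = word_mx v.
Proof. by case; rewrite /= ?mulmx1 !mx2_mul ?mx2_1; congr mx2. Qed.

Lemma beq_invariant (T : Type) (f : word -> T) :
  (forall u x y v, brel x y -> f (u ++ x ++ v) = f (u ++ y ++ v)) ->
  forall w w', beq w w' -> f w = f w'.
Proof. by move=> Hf w w'; elim=> [u x y v /Hf | | ? ? _ -> | ? ? ? _ -> _ ->]. Qed.

Lemma beq_word_mx : forall u v, beq u v -> word_mx u = word_mx v.
Proof.
by apply: beq_invariant => u x y v /brel_word_mx Exy; rewrite !word_mx_cat Exy.
Qed.

Lemma beq_exp_sum : forall u v, beq u v -> exp_sum u = exp_sum v.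
Proof.
apply: beq_invariant => u x y v; rewrite !exp_sum_cat.
by case=> //; rewrite /exp_sum !big_cons !big_nil.
Qed.

Lemma beq_cat u u' v v' : beq u u' -> beq v v' -> beq (u ++ v) (u' ++ v').
Proof.
have catl p w w' : beq w w' -> beq (p ++ w) (p ++ w').
  elim=> [u1 x y v1 Hr | w0 | ? ? _ /beq_sym | ? ? ? _ H1 _ /(beq_trans H1)] //;
    last exact: beq_refl.
  by have := beq_step (p ++ u1) v1 Hr; rewrite -!catA.
have catr q w w' : beq w w' -> beq (w ++ q) (w' ++ q).
  elim=> [u1 x y v1 Hr | w0 | ? ? _ /beq_sym | ? ? ? _ H1 _ /(beq_trans H1)] //;
    last exact: beq_refl.
  by have := beq_step u1 (v1 ++ q) Hr; rewrite -!catA.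
by move=> /(catr v) Hu /(catl u') Hv; apply: beq_trans Hu Hv.
Qed.

Definition gen_inv (x : gen) : gen :=
  match x with s1 => s1i | s2 => s2i | s1i => s1 | s2i => s2 end.

Lemma gen_invK : involutive gen_inv.
Proof. by case. Qed.

Lemma beq_cancel u v x : beq (u ++ x :: gen_inv x :: v) (u ++ v).
Proof. by apply: (@beq_step u [:: x; gen_inv x] [::] v); case: x; constructor. Qed.

Definition tau (x : gen) : gen :=
  match x with s1 => s2 | s2 => s1 | s1i => s2i | s2i => s1i end.

Lemma tauK : involutive tau.
Proof. by case. Qed.

Lemma beq_Delta_conj z : beq (z :: Delta) (Delta ++ [:: tau z]).
Proof.
case: z.
- exact: (beq_step [:: s1] [::] br_braid).
- exact: beq_sym (beq_step [::] [:: s1] br_braid).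
- apply: beq_trans (beq_cancel [::] [:: s2; s1] s1i) _.
  exact: beq_sym (beq_trans (beq_step [::] [:: s2i] br_braid) (beq_cancel [:: s2; s1] [::] s2)).
- apply: beq_trans
    (beq_trans (beq_step [:: s2i] [::] br_braid) (beq_cancel [::] [:: s1; s2] s2i)) _.
  exact: beq_sym (beq_cancel [:: s1; s2] [::] s1).
Qed.

Lemma beq_Delta_Delta_inv : beq (Delta ++ Delta_inv) [::].
Proof.
apply: beq_trans (beq_cancel [:: s1; s2] [:: s2i; s1i] s1) _.
exact: beq_trans (beq_cancel [:: s1] [:: s1i] s2) (beq_cancel [::] [::] s1).
Qed.

Lemma beq_Delta_inv_Delta : beq (Delta_inv ++ Delta) [::].
Proof.
apply: beq_trans (beq_cancel [:: s1i; s2i] [:: s2; s1] s1i) _.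
exact: beq_trans (beq_cancel [:: s1i] [:: s1] s2i) (beq_cancel [::] [::] s1i).
Qed.

Lemma beq_conj_inv x y X X' :
  beq (x ++ X) (X ++ y) -> beq (X ++ X') [::] -> beq (X' ++ X) [::] ->
  beq (X' ++ x) (y ++ X').
Proof.
move=> Hx HXX' HX'X.
have refl w : beq w w by exact: beq_refl.
apply: (@beq_trans _ (X' ++ (x ++ X) ++ X')).
  by rewrite -[X' ++ x]cats0 -(catA x) catA; apply/beq_sym/(beq_cat (refl _)).
apply: (@beq_trans _ ((X' ++ X) ++ y ++ X')).
  by rewrite -(catA X') (catA X y); apply: beq_cat (refl _) (beq_cat Hx (refl _)).
exact: (beq_cat HX'X (refl _)).
Qed.

Lemma beq_Delta_inv_conj z : beq (z :: Delta_inv) (Delta_inv ++ [:: tau z]).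
Proof.
apply/beq_sym/(@beq_conj_inv [:: tau z] [:: z] Delta Delta_inv).
- by rewrite -{2}(tauK z); apply: beq_Delta_conj.
- exact: beq_Delta_Delta_inv.
- exact: beq_Delta_inv_Delta.
Qed.

Lemma beq_Delta_pow_conj k z :
  beq (z :: Delta_pow k) (Delta_pow k ++ [:: iter `|k|%N tau z]).
Proof.
have block X : (forall x, beq (x :: X) (X ++ [:: tau x])) -> forall n x,
    beq (x :: flatten (nseq n X)) (flatten (nseq n X) ++ [:: iter n tau x]).
  move=> HX; elim=> [|n IH] x; first exact: beq_refl.
  rewrite /= -iterS iterSr -catA.
  apply: beq_trans (beq_cat (HX x) (beq_refl _)) _.
  by rewrite -catA; apply: beq_cat (beq_refl _) (IH _).
by case: k => n; apply: block; [apply: beq_Delta_conj | apply: beq_Delta_inv_conj].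
Qed.

Lemma flatten_nseqS (T : Type) n (X : seq T) :
  flatten (nseq n.+1 X) = flatten (nseq n X) ++ X.
Proof. by elim: n => [|n /= IH] /=; rewrite ?cats0 // {1}IH catA. Qed.

Lemma beq_Delta_pow_add1 k : beq (Delta_pow k ++ Delta) (Delta_pow (k + 1)).
Proof.
case: k => [n|[|n]].
- have -> : n%:Z + 1 = n.+1 by lia.
  by rewrite [Delta_pow n.+1]flatten_nseqS; apply: beq_refl.
- have -> : Negz 0 + 1 = 0 by [].
  exact: beq_Delta_inv_Delta.
- have -> : Negz n.+1 + 1 = Negz n by rewrite !NegzE; lia.
  rewrite [Delta_pow _]flatten_nseqS -catA -[X in beq _ X]cats0.
  exact: beq_cat (beq_refl _) beq_Delta_inv_Delta.
Qed.

Lemma beq_Delta_pow_sub1 k : beq (Delta_pow k ++ Delta_inv) (Delta_pow (k - 1)).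
Proof.
case: k => [[|n]|n].
- exact: beq_refl.
- have -> : n.+1%:Z - 1 = n by lia.
  rewrite [Delta_pow _]flatten_nseqS -catA -[X in beq _ X]cats0.
  exact: beq_cat (beq_refl _) beq_Delta_Delta_inv.
- have -> : Negz n - 1 = Negz n.+1 by rewrite !NegzE; lia.
  by rewrite [Delta_pow (Negz n.+1)]flatten_nseqS; apply: beq_refl.
Qed.

Lemma exp_sum_Delta_pow k : exp_sum (Delta_pow k) = 3 * k.
Proof.
have block X n : exp_sum (flatten (nseq n X)) = exp_sum X *+ n.
  elim: n => [|n IH]; first by rewrite mulr0n /exp_sum big_nil.
  by rewrite mulrS -IH -exp_sum_cat.
case: k => n; rewrite /Delta_pow block /exp_sum !big_cons big_nil -mulr_natr /=; lia.
Qed.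

Lemma word_mx_Delta_pow k : psl_eq (word_mx (Delta_pow k)) (Apow (odd `|k|%N)).
Proof.
have block X n : psl_eq (word_mx X) matA ->
    psl_eq (word_mx (flatten (nseq n X))) (Apow (odd n)).
  move=> HX; elim: n => [|n IH]; first exact: psl_eq_refl.
  rewrite /= word_mx_cat; apply: psl_eq_trans (psl_eq_mul HX IH) _.
  by case: (odd n); rewrite /= ?matA_sqr ?mulmx1; [apply/psl_eq_sym/psl_eqN | left].
case: k => n; apply: block.
  by left; rewrite /= mulmx1 !mx2_mul.
by right; rewrite /= mulmx1 !mx2_mul mx2_opp.
Qed.

Lemma word_mx_Delta_pow_bool (b : bool) : psl_eq (word_mx (Delta_pow b)) (Apow b).
Proof. by have := word_mx_Delta_pow b; rewrite /= oddb. Qed.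

Lemma word_mx_Delta_pow_cat s k w : beq s (Delta_pow k ++ w) ->
  psl_eq (word_mx s) (Apow (odd `|k|%N) *m word_mx w).
Proof.
move=> /beq_word_mx ->; rewrite word_mx_cat.
exact: psl_eq_mul (word_mx_Delta_pow k) (psl_eq_refl _).
Qed.

(** * Every braid is Delta^k times a one-signed word *)

Definition pos_gen (x : gen) : bool := match x with s1i | s2 => true | _ => false end.

Definition pos_or_neg_letters (w : word) : bool := pos_letters w || neg_letters w.

Lemma pos_or_neg_letters_behead x w :
  pos_or_neg_letters (x :: w) -> pos_or_neg_letters w.
Proof.
by rewrite /pos_or_neg_letters /pos_letters /neg_letters /= => /orP [] /andP [_ ->];
  rewrite ?orbT.
Qed.

Lemma beq_gen_tau z : beq [:: z; tau z] (Delta_pow (gen_sign z) ++ [:: gen_inv z]).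
Proof.
apply: beq_sym; case: z.
- exact: beq_cancel [:: s1; s2] [::] s1.
- exact: beq_trans (beq_step [::] [:: s2i] br_braid) (beq_cancel [:: s2; s1] [::] s2).
- exact: beq_cancel [:: s1i; s2i] [::] s1i.
- exact: beq_trans (beq_sym (beq_Delta_inv_conj s1)) (beq_cancel [::] [:: s2i; s1i] s1).
Qed.

Lemma beq_Delta_pow_gen_sign k z :
  beq (Delta_pow k ++ Delta_pow (gen_sign z)) (Delta_pow (k + gen_sign z)).
Proof.
by case: z; [apply: beq_Delta_pow_add1 | apply: beq_Delta_pow_add1
            | apply: beq_Delta_pow_sub1 | apply: beq_Delta_pow_sub1].
Qed.

Lemma beq_Delta_pow_cons k z w : pos_or_neg_letters w ->
  exists k' w', beq (Delta_pow k ++ z :: w) (Delta_pow k' ++ w') /\ pos_or_neg_letters w'.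
Proof.
case: w => [|y w] Hw; first by exists k, [:: z]; split; [apply: beq_refl | case: z].
have [Hzy | Hzy] := eqVneq (pos_gen z) (pos_gen y).
  exists k, [:: z, y & w]; split; first exact: beq_refl.
  by move: Hzy Hw; rewrite /pos_or_neg_letters; case: z; case: y.
have Ey : y = gen_inv z \/ y = tau z.
  by move: Hzy {Hw}; case: z; case: y => //= _; auto.
clear Hzy; case: Ey Hw => -> Hw.
  exists k, w; split; last exact: pos_or_neg_letters_behead Hw.
  exact: beq_cat (beq_refl _) (beq_cancel [::] w z).
exists (k + gen_sign z), (gen_inv z :: w); split.
  apply: beq_trans (beq_cat (beq_refl _) (beq_cat (beq_gen_tau z) (beq_refl w))) _.
  by rewrite -catA catA; apply: beq_cat (beq_Delta_pow_gen_sign k z) (beq_refl _).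
by move: Hw; rewrite /pos_or_neg_letters; case: z.
Qed.

Lemma Delta_pow_decomposition s :
  exists k w, beq s (Delta_pow k ++ w) /\ pos_or_neg_letters w.
Proof.
elim: s => [|z s [k [w [Hs Hw]]]]; first by exists 0, [::]; split; first exact: beq_refl.
have [k' [w' [Hk' Hw']]] := beq_Delta_pow_cons k (iter `|k|%N tau z) Hw.
exists k', w'; split=> //; apply: beq_trans Hk'.
apply: beq_trans (beq_cat (beq_refl [:: z]) Hs) _.
by rewrite catA -[_ :: w]cat1s catA; apply: beq_cat (beq_Delta_pow_conj k z) (beq_refl w).
Qed.

(** * One-signed words in PSL(2,Z) *)

Lemma word_mx_tau u : word_mx u *m matA = matA *m word_mx (map tau u).
Proof.
elim: u => [|x u IH] /=; first by rewrite mulmx1 mul1mx.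
by rewrite -mulmxA IH !mulmxA; congr (_ *m _); case: x; rewrite !mx2_mul.
Qed.

Lemma exp_sum_tau u : exp_sum (map tau u) = exp_sum u.
Proof. by rewrite /exp_sum big_map; apply: eq_bigr; case. Qed.

Lemma neg_letters_tau u : pos_letters u -> neg_letters (map tau u).
Proof. by elim: u => [|[] u IH]. Qed.

Lemma pos_letters_tau u : neg_letters u -> pos_letters (map tau u).
Proof. by elim: u => [|[] u IH]. Qed.

Lemma Apow_word_Apow c u d :
  psl_eq (Apow c *m word_mx u *m Apow d)
         (Apow (c (+) d) *m word_mx (if d then map tau u else u)).
Proof.
case: d; last by rewrite mulmx1 addbF; apply: psl_eq_refl.
rewrite -mulmxA word_mx_tau mulmxA addbT.
exact: psl_eq_mul (Apow_mulA c) (psl_eq_refl _).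
Qed.

Definition pos_entries (a b c d : int) : Prop :=
  [/\ 0 < a, 0 <= b, 0 <= c, 0 < d & a * d - b * c = 1].

Lemma pos_letters_mx w : pos_letters w ->
  exists a b c d, word_mx w = mx2 a b c d /\ pos_entries a b c d.
Proof.
elim: w => [|x w IH] /=; first by exists 1, 0, 0, 1; rewrite mx2_1.
case: x => //= /IH [a [b [c [d [-> [Ha Hb Hc Hd Hdet]]]]]]; rewrite mx2_mul.
- by exists (a + c), (b + d), c, d; split; [congr mx2; lia | split; lia].
- by exists a, b, (a + c), (b + d); split; [congr mx2; lia | split; lia].
Qed.

Lemma pos_letters_cat u v : pos_letters (u ++ v) = pos_letters u && pos_letters v.
Proof. exact: all_cat. Qed.

Lemma pos_letters_gen_inv w : neg_letters w -> pos_letters (map gen_inv w).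
Proof. by elim: w => [|[] w IH]. Qed.

Lemma word_mx_gen_inv w :
  word_mx (map gen_inv w) = mx2 1 0 0 (-1) *m word_mx w *m mx2 1 0 0 (-1).
Proof.
elim: w => [|x w IH] /=; first by rewrite mulmx1 mx2_1 mx2_mul.
by rewrite IH !mulmxA; congr (_ *m _ *m _); case: x; rewrite !mx2_mul.
Qed.

Lemma neg_letters_mx w : neg_letters w ->
  exists a b c d : int, word_mx w = mx2 a (- b) (- c) d /\ pos_entries a b c d.
Proof.
move=> /pos_letters_gen_inv /pos_letters_mx [a [b [c [d [E Habcd]]]]].
exists a, b, c, d; split=> //.
by rewrite -[w](mapK gen_invK) word_mx_gen_inv E !mx2_mul; congr mx2; lia.
Qed.

Lemma pos_word_mx_inj w1 w2 :
  pos_letters w1 -> pos_letters w2 -> word_mx w1 = word_mx w2 -> w1 = w2.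
Proof.
have cons_neq1 y w : pos_letters (y :: w) -> word_mx (y :: w) != 1%:M.
  case/andP=> Hy /pos_letters_mx [a [b [c [d [E [? ? ? ? ?]]]]]].
  apply/eqP; rewrite /= E mx2_1.
  by case: y Hy => // _; rewrite mx2_mul => /mx2_inj []; lia.
elim: w1 w2 => [|x w1 IH] [|y w2] //.
- by move=> _ /cons_neq1 /eqP H E; case: H; rewrite -E.
- by move=> /cons_neq1 /eqP H _ E; case: H; rewrite E.
case/andP=> Hx Hw1 /andP [Hy Hw2].
have [a [b [c [d [E1 [? ? ? ? ?]]]]]] := pos_letters_mx Hw1.
have [a' [b' [c' [d' [E2 [? ? ? ? ?]]]]]] := pos_letters_mx Hw2.
rewrite /= E1 E2; case: x Hx; case: y Hy => // _ _; rewrite !mx2_mul => /mx2_inj [] *;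
  first [lia | congr cons; apply: IH => //; rewrite E1 E2; congr mx2; lia].
Qed.

Lemma neg_word_mx_inj w1 w2 :
  neg_letters w1 -> neg_letters w2 -> word_mx w1 = word_mx w2 -> w1 = w2.
Proof.
move=> /pos_letters_gen_inv Hw1 /pos_letters_gen_inv Hw2 E.
apply: (inj_map (can_inj gen_invK)); apply: pos_word_mx_inj => //.
by rewrite !word_mx_gen_inv E.
Qed.

Lemma pos_neg_word_mx_eq w w' : pos_letters w -> neg_letters w' ->
  word_mx w = word_mx w' -> w = [::] /\ w' = [::].
Proof.
move=> Hw Hw' E; have E1 : word_mx w = word_mx [::].
  have [a [b [c [d [Ew [? ? ? ? ?]]]]]] := pos_letters_mx Hw.
  have [a' [b' [c' [d' [Ew' [? ? ? ? ?]]]]]] := neg_letters_mx Hw'.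
  move: E; rewrite Ew Ew' /= mx2_1 => /mx2_inj [? ? ? ?].
  by congr mx2; nia.
split; first exact: pos_word_mx_inj E1.
by apply: neg_word_mx_inj => //; rewrite -E.
Qed.

Lemma pos_or_neg_word_mx_inj w1 w2 :
  pos_or_neg_letters w1 -> pos_or_neg_letters w2 ->
  psl_eq (word_mx w1) (word_mx w2) -> w1 = w2.
Proof.
move=> Hw1 Hw2 E; have {}E : word_mx w1 = word_mx w2.
  case: E => // E; exfalso; move: E.
  case/orP: Hw1 => [/pos_letters_mx | /neg_letters_mx] [a [b [c [d [-> [? ? ? ? ?]]]]]];
  case/orP: Hw2 => [/pos_letters_mx | /neg_letters_mx] [a' [b' [c' [d' [-> [? ? ? ? ?]]]]]];
  by rewrite mx2_opp => /mx2_inj []; lia.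
case/orP: Hw1 => Hw1; case/orP: Hw2 => Hw2.
- exact: pos_word_mx_inj.
- by have [-> ->] := pos_neg_word_mx_eq Hw1 Hw2 E.
- by have [-> ->] := pos_neg_word_mx_eq Hw2 Hw1 (esym E).
- exact: neg_word_mx_inj.
Qed.

Lemma matA_word_mx_neq w1 w2 : pos_or_neg_letters w1 -> pos_or_neg_letters w2 ->
  ~ psl_eq (matA *m word_mx w1) (word_mx w2).
Proof.
move=> Hw1 Hw2.
case/orP: Hw1 => [/pos_letters_mx | /neg_letters_mx] [a [b [c [d [-> [? ? ? ? ?]]]]]];
case/orP: Hw2 => [/pos_letters_mx | /neg_letters_mx] [a' [b' [c' [d' [-> [? ? ? ? ?]]]]]];
by rewrite mx2_mul; case; rewrite ?mx2_opp => /mx2_inj []; lia.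
Qed.

Lemma Apow_word_mx_inj b1 b2 w1 w2 :
  pos_or_neg_letters w1 -> pos_or_neg_letters w2 ->
  psl_eq (Apow b1 *m word_mx w1) (Apow b2 *m word_mx w2) -> w1 = w2.
Proof.
move=> Hw1 Hw2; case: b1; case: b2; rewrite /= ?mul1mx => E.
- apply: pos_or_neg_word_mx_inj => //.
  have := psl_eq_mul (psl_eq_refl matA) E; rewrite !mulmxA matA_sqr !mulNmx !mul1mx.
  by move=> /(psl_eq_trans (psl_eqN _)) /psl_eq_trans; apply; apply/psl_eq_sym/psl_eqN.
- by case: (matA_word_mx_neq Hw1 Hw2).
- by case: (matA_word_mx_neq Hw2 Hw1); apply: psl_eq_sym.
- exact: pos_or_neg_word_mx_inj.
Qed.

(** * Rademacher normal forms *)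

(* [B^x A] is s2, -s1^-1 or A according as x is 1, -1 or 0 (or anything else, where
   [Bpow] is 1), and A is the image of Delta. *)
Definition syllable (x : int) : word :=
  if x == 1 then [:: s2] else if x == -1 then [:: s1i] else Delta.

Lemma Bpow_mulA x : psl_eq (Bpow x *m matA) (word_mx (syllable x)).
Proof.
rewrite /Bpow /syllable; case: eqP => _; first by left; rewrite /= mulmx1 mx2_mul.
case: eqP => _; first by right; rewrite /= mulmx1 mx2_mul mx2_opp.
by left; rewrite mul1mx /= mulmx1 !mx2_mul.
Qed.

Lemma nf_mx_mulA r : r != [::] ->
  psl_eq (nf_mx r *m matA) (word_mx (flatten (map syllable r))).
Proof.
elim: r => [|x [|y r] IH] // _; first by rewrite /= cats0; apply: Bpow_mulA.
rewrite -[nf_mx _]/(Bpow x *m matA *m nf_mx (y :: r)) -mulmxA.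
by rewrite [flatten _]/= word_mx_cat; apply: psl_eq_mul (Bpow_mulA x) (IH isT).
Qed.

(* The exponent list of the normal form of [A^c u A^d] for a positive word [u]: a final
   exponent 0 is present exactly when there is no final A. *)
Definition nf_seq (c : bool) (u : word) (d : bool) : seq int :=
  nseq c 0 ++ map gen_sign u ++ nseq (~~ d) 0.

Lemma flatten_syllable_nf_seq c u d : pos_letters u ->
  flatten (map syllable (nf_seq c u d)) = Delta_pow c ++ u ++ Delta_pow (~~ d).
Proof.
move=> Hu; rewrite /nf_seq !map_cat !flatten_cat !map_nseq; congr (_ ++ _ ++ _).
by elim: u Hu => [|x u IH] //= /andP [Hx /IH ->]; case: x Hx.
Qed.

Lemma nf_mx_nf_seq c u d : pos_letters u -> nf_seq c u d != [::] ->
  psl_eq (nf_mx (nf_seq c u d)) (Apow c *m word_mx u *m Apow d).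
Proof.
move=> Hu /nf_mx_mulA; rewrite flatten_syllable_nf_seq // !word_mx_cat mulmxA => HrA.
apply: psl_eq_trans (psl_eq_sym (psl_eq_mulAA _)) _.
apply: psl_eq_trans (psl_eq_mul HrA (psl_eq_refl matA)) _; rewrite -mulmxA.
apply: psl_eq_mul (psl_eq_mul (word_mx_Delta_pow_bool c) (psl_eq_refl _)) _.
apply: psl_eq_trans (psl_eq_mul (word_mx_Delta_pow_bool _) (psl_eq_refl _)) _.
by rewrite -{2}[d]negbK; apply: Apow_mulA.
Qed.

Lemma sum_nf_seq c u d : \sum_(x <- nf_seq c u d) x = exp_sum u.
Proof.
rewrite /nf_seq !big_cat big_map /=.
by case: c; case: d; rewrite /= ?big_cons ?big_nil ?add0r ?addr0.
Qed.

Lemma nf_ok_rcons x m y :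
  nf_ok (x :: rcons m y) = [&& in_m101 x, in_m101 y & all in_pm1 m].
Proof. by rewrite /nf_ok last_rcons belast_rcons /= andbA. Qed.

Lemma nf_ok_nf_seq c u d : nf_seq c u d != [::] -> nf_ok (nf_seq c u d).
Proof.
have pm1 v : all in_pm1 (map gen_sign v) by elim: v => [|[] v IH].
have m101 x : in_m101 (gen_sign x) by case: x.
have nseqT : nseq true 0 = [:: 0] :> seq int by [].
have nseqF : nseq false 0 = [::] :> seq int by [].
rewrite /nf_seq; case: c; case: d; rewrite ?nseqT ?nseqF ?cat1s ?cat0s ?cats0 ?cats1.
- by case/lastP: u => [|u x] // _; rewrite map_rcons nf_ok_rcons m101 pm1.
- by rewrite nf_ok_rcons pm1.
- case: u => [|x u] // _; case/lastP: u => [|u y]; first by case: x.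
  by rewrite map_cons map_rcons nf_ok_rcons !m101 pm1.
- by case: u => [|x u] // _; rewrite map_cons rcons_cons nf_ok_rcons m101 pm1.
Qed.

Definition pos_gen_of (x : int) : gen := if x == 1 then s2 else s1i.

Lemma nf_ok_inv r : nf_ok r ->
  r = [:: 0] \/ exists c u d, pos_letters u /\ r = nf_seq c u d.
Proof.
have pos_map s : pos_letters (map pos_gen_of s).
  by elim: s => [|x s IH] //=; rewrite IH /pos_gen_of andbT; case: eqP.
have end_word x : in_m101 x -> exists2 e, pos_letters e &
    nseq (x == 0) 0 ++ map gen_sign e = [:: x] /\ map gen_sign e ++ nseq (x == 0) 0 = [:: x].
  by case/or3P=> /eqP ->; [exists [:: s1i] | exists [::] | exists [:: s2]].
case: r => [|x r] //; case/lastP: r => [|m y].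
  rewrite /nf_ok /= andbT andbb => /end_word [e He [Ex _]].
  have [-> | x0] := eqVneq x 0; [by left | right].
  by exists false, e, true; rewrite /nf_seq /= cats0 -Ex (negbTE x0).
rewrite nf_ok_rcons => /and3P [/end_word [e He [Ex _]] /end_word [e' He' [_ Ey]] Hm].
right; exists (x == 0), (e ++ map pos_gen_of m ++ e'), (y != 0); split.
  by rewrite !pos_letters_cat He He' pos_map.
have Em : map gen_sign (map pos_gen_of m) = m.
  rewrite -map_comp map_id_in // => z /(allP Hm) /=.
  by rewrite /pos_gen_of; case/orP=> /eqP ->.
by rewrite /nf_seq negbK !map_cat Em -!catA (catA (nseq _ _)) Ex Ey cats1.
Qed.

Lemma nf_mx_shape r : nf_ok r -> exists b v, pos_or_neg_letters v /\
  psl_eq (nf_mx r) (Apow b *m word_mx v) /\ \sum_(x <- r) x = exp_sum v.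
Proof.
move=> Hr; have r_neq0 : r != [::] by case: r Hr.
case/nf_ok_inv: Hr => [-> | [c [u [d [Hu Er]]]]].
  exists false, [::]; split=> //; split; last by rewrite big_seq1 /exp_sum big_nil.
  by rewrite /= mul1mx; left.
rewrite {}Er in r_neq0 *.
exists (c (+) d), (if d then map tau u else u); split; [|split].
- by rewrite /pos_or_neg_letters; case: (d); rewrite ?Hu ?neg_letters_tau ?orbT.
- exact: psl_eq_trans (nf_mx_nf_seq Hu r_neq0) (Apow_word_Apow c u d).
- by rewrite sum_nf_seq; case: (d); rewrite ?exp_sum_tau.
Qed.

Lemma nf_exists b v : pos_or_neg_letters v ->
  exists r, nf_ok r /\ psl_eq (nf_mx r) (Apow b *m word_mx v).
Proof.
have nf_seq_found c u d : pos_letters u -> nf_seq c u d != [::] ->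
    psl_eq (Apow c *m word_mx u *m Apow d) (Apow b *m word_mx v) ->
    exists r, nf_ok r /\ psl_eq (nf_mx r) (Apow b *m word_mx v).
  move=> Hu Hne E; exists (nf_seq c u d); split; first exact: nf_ok_nf_seq.
  exact: psl_eq_trans (nf_mx_nf_seq Hu Hne) E.
move=> Hpn; have [Hv | Hv] := boolP (pos_letters v).
  apply: (nf_seq_found b v false) => //; first by rewrite /nf_seq -nilpE !cat_nilp /= !andbF.
  by rewrite mulmx1; apply: psl_eq_refl.
have /pos_letters_tau Hu : neg_letters v by case/orP: Hpn => // Hp; rewrite Hp in Hv.
apply: (nf_seq_found (~~ b) (map tau v) true) => //.
  by rewrite /nf_seq -nilpE !cat_nilp; case: (v) Hv => //= *; rewrite andbF.
by have := Apow_word_Apow (~~ b) (map tau v) true; rewrite addbT negbK mapK //; apply: tauK.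
Qed.

Lemma Phi_Apow_word b w g : pos_or_neg_letters w ->
  psl_eq g (Apow b *m word_mx w) -> Phi g = exp_sum w.
Proof.
move=> Hw Hg; have [r0 [Hr0 E0]] := nf_exists b Hw.
have /(epsilon_spec (inhabits [::])) : exists r, is_nf g r.
  by exists r0; split=> //; apply: psl_eq_trans E0 (psl_eq_sym Hg).
rewrite /Phi; set r := epsilon _ _ => -[Hr Er].
have [b' [v [Hv [Ev ->]]]] := nf_mx_shape Hr.
congr exp_sum; apply: Apow_word_mx_inj Hv Hw _.
exact: psl_eq_trans (psl_eq_sym Ev) (psl_eq_trans Er Hg).
Qed.

(** * The rotation number *)

Lemma ratioN n d : Defs.ratio (- n) (- d) = Defs.ratio n d.
Proof. by rewrite /Defs.ratio oppr_eq0; case: ifP => // _; rewrite !intrN invrN mulrNN. Qed.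

Lemma ratio_frac n d : d != 0 -> Defs.ratio n d = Some (n%:~R / d%:~R).
Proof. by rewrite /Defs.ratio => /negbTE ->. Qed.

Lemma ra_mx2 a b c d : ra (mx2 a b c d) = Defs.ratio c a.
Proof. by rewrite /ra !mxE. Qed.

Lemma rb_mx2 a b c d : rb (mx2 a b c d) = Defs.ratio d b.
Proof. by rewrite /rb !mxE. Qed.

Lemma psl_eq_ra_rb M N : psl_eq M N -> ra M = ra N /\ rb M = rb N.
Proof. by case=> ->; rewrite /ra /rb ?mxE ?ratioN. Qed.

Lemma frac_lt n1 d1 n2 d2 : 0 < d1 -> 0 < d2 -> n1 * d2 < n2 * d1 ->
  n1%:~R / d1%:~R < n2%:~R / d2%:~R :> rat.
Proof.
move=> Hd1 Hd2 H.
by rewrite ltr_pdivrMr ?ltr0z // mulrAC ltr_pdivlMr ?ltr0z // -!intrM ltr_int.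
Qed.

Lemma frac_ge0 n d : 0 <= n -> 0 < d -> 0 <= n%:~R / d%:~R :> rat.
Proof. by move=> Hn Hd; apply: divr_ge0; rewrite ler0z // ltW. Qed.

Lemma frac_le0 n d : n <= 0 -> 0 < d -> n%:~R / d%:~R <= 0 :> rat.
Proof. by move=> Hn Hd; rewrite ler_pdivrMr ?ltr0z // mul0r lerz0. Qed.

Lemma rot_case_Apow_word b w : pos_or_neg_letters w ->
  let M := Apow b *m word_mx w in
  [\/ [&& case1 (ra M) (rb M), ~~ b & pos_letters w],
      [&& case2 (ra M) (rb M), b & pos_letters w],
      [&& case3 (ra M) (rb M), b & neg_letters w]
    | [&& case4 (ra M) (rb M), ~~ b & neg_letters w]].
Proof.
case/orP=> Hw; [move: (Hw) => /pos_letters_mx | move: (Hw) => /neg_letters_mx];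
  move=> [a [b' [c [d [-> [Ha Hb Hc Hd Hdet]]]]]];
  case: b; rewrite /= ?mul1mx ?mx2_mul ra_mx2 rb_mx2 Hw ?andbT
    ?mul0r ?mul1r ?mulN1r ?add0r ?addr0 ?opprK.
- apply: Or42; rewrite (ratio_frac _ (lt0r_neq0 Hd)).
  have [-> | Hc0] := eqVneq c 0; first by apply: frac_le0; lia.
  by rewrite ratio_frac //=; apply/andP; split; [apply: frac_lt | apply: frac_le0]; nia.
- apply: Or41; rewrite (ratio_frac _ (lt0r_neq0 Ha)).
  have [-> | Hb0] := eqVneq b' 0; first exact: frac_ge0.
  by rewrite ratio_frac //=; apply/andP; split; [apply: frac_ge0 | apply: frac_lt]; nia.
- apply: Or43; rewrite /case3 ratioN (ratio_frac _ (lt0r_neq0 Hd)).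
  have [-> | Hc0] := eqVneq c 0; first exact: frac_ge0.
  by rewrite ratio_frac //=; apply/andP; split; [apply: frac_ge0 | apply: frac_lt]; nia.
- apply: Or44; rewrite /case4 (ratio_frac _ (lt0r_neq0 Ha)).
  have [-> | Hb0] := eqVneq b' 0; first by rewrite oppr0 /=; apply: frac_le0; lia.
  rewrite -[Defs.ratio d _]ratioN opprK ratio_frac //=.
  by apply/andP; split; [apply: frac_lt | apply: frac_le0]; nia.
Qed.

Lemma rot_decomp_exists s : exists kw, rot_decomp s kw.
Proof.
have [k [w [Hs Hw]]] := Delta_pow_decomposition s.
exists (k, w); split=> //.
have [-> ->] := psl_eq_ra_rb (word_mx_Delta_pow_cat Hs).
exact: rot_case_Apow_word.
Qed.

Definition Delta_exponent (s : word) : int :=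
  (epsilon (inhabits (0%:Z, [::])) (rot_decomp s)).1.

Lemma Phi_lift s g : lifts s g -> Phi g = exp_sum s - 3 * Delta_exponent s.
Proof.
move=> Hsg; rewrite /Delta_exponent.
have := epsilon_spec (inhabits (0%:Z, [::])) (rot_decomp s) (rot_decomp_exists s).
case: (epsilon _ (rot_decomp s)) => k w /= [Hs Hcase].
have Hw : pos_or_neg_letters w.
  by rewrite /pos_or_neg_letters; case: Hcase => /and3P [_ _ ->]; rewrite ?orbT.
have Hg := psl_eq_trans (psl_eq_sym Hsg) (word_mx_Delta_pow_cat Hs).
by rewrite (Phi_Apow_word Hw Hg) (beq_exp_sum Hs) exp_sum_cat exp_sum_Delta_pow addrAC subrr add0r.
Qed.

Theorem corollary3p1 (g1 g2 : 'M[int]_2) :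
  \det g1 = 1 -> \det g2 = 1 ->
  forall t1 t2 : word, lifts t1 g1 -> lifts t2 g2 ->
  ((Phi g1 + Phi g2 - Phi (g1 *m g2))%:~R : rat)
    = - 12 * (braid_rot t1 + braid_rot t2 - braid_rot (t1 ++ t2)).
Proof.
(* The determinant hypotheses are implied by the existence of lifts. *)
move=> _ _ t1 t2 H1 H2.
have H12 : lifts (t1 ++ t2) (g1 *m g2) by rewrite /lifts word_mx_cat; apply: psl_eq_mul.
have rotE s : braid_rot s = (Delta_exponent s)%:~R / 4 by [].
rewrite (Phi_lift H1) (Phi_lift H2) (Phi_lift H12) !rotE exp_sum_cat.
by rewrite !(intrD, intrB, intrM); field.
Qed.
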